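(* Let $d, n$ be positive integers and let $\delta \ge 0$ satisfy $\delta n < 1$. Let $\mathbf{v}_1, \ldots, \mathbf{v}_n \in \mathbb{R}^d$ be unit vectors that are pairwise $\delta$-orthogonal, i.e. $|\mathbf{v}_i \cdot \mathbf{v}_j| \le \delta$ for all $i \neq j$. Let $\mathbf{z} = (z_1, \ldots, z_n)^T \in \mathbb{R}^n$ and suppose that $\mathbf{y} = \sum_{k=1}^n z_k \mathbf{v}_k$ (equivalently $\mathbf{y} = \mathbf{A}\mathbf{z}$ with $\mathbf{A} = [\mathbf{v}_1, \ldots, \mathbf{v}_n]$) satisfies $\lVert \mathbf{y} \rVert_2 = 1$. Then $$\left|\sum_{k=1}^{n} z_k\right| \le \lVert \mathbf{z} \rVert_1 \le \sqrt{\frac{n}{1 - \delta n}}.$$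
   Context: $\lVert \cdot \rVert_1$ and $\lVert \cdot \rVert_2$ denote the $\ell_1$ and Euclidean norms. Two unit vectors are called $\delta$-orthogonal if the absolute value of their dot product is at most $\delta$. *)

From mathcomp Require Import all_boot all_order all_algebra.
Set Implicit Arguments. Unset Strict Implicit. Unset Printing Implicit Defensive.
Import Order.TTheory GRing.Theory Num.Theory.
Local Open Scope ring_scope.

Definition dotv (R : realFieldType) (d : nat) (u v : 'rV[R]_d) : R :=
  \sum_(i < d) u 0 i * v 0 i.

Definition norm2 (R : rcfType) (d : nat) (u : 'rV[R]_d) : R :=
  Num.sqrt (dotv u u).

Definition norm1 (R : realFieldType) (n : nat) (z : 'rV[R]_n) : R :=
  \sum_(k < n) `|z 0 k|.

Definition delta_orth (R : realFieldType) (d : nat) (delta : R) (u v : 'rV[R]_d) : Prop :=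
  `|dotv u v| <= delta.

From mathcomp Require Import all_boot all_order all_algebra.
From mathcomp Require Import ring lra.
Set Implicit Arguments. Unset Strict Implicit. Unset Printing Implicit Defensive.
Import Order.TTheory GRing.Theory Num.Theory.
Local Open Scope ring_scope.

(* Expanding |y|^2 for y = sum_k z_k v_k, the diagonal contributes sum_k z_k^2 and
   delta-orthogonality bounds the off-diagonal terms below by -delta |z|_1^2, so
   1 >= |z|_2^2 - delta |z|_1^2.  Cauchy-Schwarz, |z|_1^2 <= n |z|_2^2, turns this
   into |z|_1^2 (1 - delta n) / n <= 1. *)

Lemma dotvv_ge0 (R : realFieldType) d (u : 'rV[R]_d) : 0 <= dotv u u.
Proof. by apply: sumr_ge0 => i _; rewrite -expr2 sqr_ge0. Qed.

Lemma norm2_eq1_dotvv (R : rcfType) d (u : 'rV[R]_d) :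
  norm2 u = 1 -> dotv u u = 1.
Proof. by move=> u1; rewrite -(sqr_sqrtr (dotvv_ge0 u)) -/(norm2 u) u1 expr1n. Qed.

Lemma dotv_sumZ (R : realFieldType) d m n (a : 'I_m -> R) (b : 'I_n -> R)
    (u : 'I_m -> 'rV[R]_d) (w : 'I_n -> 'rV[R]_d) :
  dotv (\sum_(k < m) a k *: u k) (\sum_(l < n) b l *: w l) =
  \sum_(k < m) \sum_(l < n) a k * b l * dotv (u k) (w l).
Proof.
rewrite /dotv.
under eq_bigr => i _ do rewrite !summxE mulr_suml.
rewrite exchange_big /=; apply: eq_bigr => k _.
under eq_bigr => i _ do rewrite mulr_sumr.
rewrite exchange_big /=; apply: eq_bigr => l _.
by rewrite mulr_sumr; apply: eq_bigr => i _; rewrite !mxE; ring.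
Qed.

Lemma norm1_sqr (R : realFieldType) n (z : 'rV[R]_n) :
  norm1 z ^+ 2 = \sum_(k < n) \sum_(l < n) `|z 0 k| * `|z 0 l|.
Proof. by rewrite expr2 mulr_suml; apply: eq_bigr => k _; rewrite mulr_sumr. Qed.

Lemma norm1_sqr_le (R : realFieldType) n (z : 'rV[R]_n) :
  norm1 z ^+ 2 <= n%:R * \sum_(k < n) z 0 k ^+ 2.
Proof.
set S2 := \sum_(k < n) _.
have AMGM (k l : 'I_n) : `|z 0 k| * `|z 0 l| <= (z 0 k ^+ 2 + z 0 l ^+ 2) / 2.
  rewrite -(real_normK (num_real (z 0 k))) -(real_normK (num_real (z 0 l))).
  have := sqr_ge0 (`|z 0 k| - `|z 0 l|); lra.
rewrite norm1_sqr; apply: le_trans (ler_sum _ (fun k _ => ler_sum _ (fun l _ => AMGM k l))) _.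
under eq_bigr => k _ do rewrite -mulr_suml big_split /= sumr_const card_ord.
rewrite -mulr_suml big_split /= sumr_const card_ord sumrMnl -/S2 -mulr_natl.
lra.
Qed.

Lemma dotv_sumZ_ge (R : realFieldType) d n (delta : R)
    (v : 'I_n -> 'rV[R]_d) (z : 'rV[R]_n) :
  0 <= delta -> (forall i, dotv (v i) (v i) = 1) ->
  (forall i j, i != j -> delta_orth delta (v i) (v j)) ->
  \sum_(k < n) z 0 k ^+ 2 - delta * norm1 z ^+ 2 <=
  dotv (\sum_(k < n) z 0 k *: v k) (\sum_(k < n) z 0 k *: v k).
Proof.
move=> delta_ge0 v_unit v_orth; rewrite dotv_sumZ norm1_sqr mulr_sumr -sumrB.
apply: ler_sum => k _; rewrite mulr_sumr.
rewrite (bigD1 k) //= [X in _ <= X](bigD1 k) //= opprD addrA.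
apply: lerD.
  rewrite v_unit mulr1 -normrM -expr2 ger0_norm ?sqr_ge0 // gerBl.
  by rewrite mulr_ge0 ?sqr_ge0.
rewrite -sumrN; apply: ler_sum => l lk.
have : `|dotv (v k) (v l)| <= delta by apply: v_orth; rewrite eq_sym.
rewrite lerNl -normrM => orth_kl.
apply: le_trans (ler_norm _) _.
by rewrite normrN [X in X <= _]normrM mulrC; apply: ler_wpM2r.
Qed.

Theorem mainTheorem1 (R : rcfType) (d n : nat) (delta : R)
  (v : 'I_n -> 'rV[R]_d) (z : 'rV[R]_n) :
  (0 < d)%N -> (0 < n)%N ->
  0 <= delta -> delta * n%:R < 1 ->
  (forall i, norm2 (v i) = 1) ->
  (forall i j, i != j -> delta_orth delta (v i) (v j)) ->
  norm2 (\sum_(k < n) z 0 k *: v k) = 1 ->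
  `|\sum_(k < n) z 0 k| <= norm1 z /\
  norm1 z <= Num.sqrt (n%:R / (1 - delta * n%:R)).
Proof.
move=> _ _ delta_ge0 delta_n v_unit v_orth y_unit.
split; first exact: ler_norm_sum.
have gram := dotv_sumZ_ge z delta_ge0 (fun i => norm2_eq1_dotvv (v_unit i)) v_orth.
rewrite (norm2_eq1_dotvv y_unit) in gram.
have cauchy_schwarz := norm1_sqr_le z.
have S1_ge0 : 0 <= norm1 z by apply: sumr_ge0.
have S1_sqr_le : norm1 z ^+ 2 <= n%:R / (1 - delta * n%:R).
  rewrite ler_pdivlMr ?subr_gt0 //.
  have := ler_wpM2l (ler0n R n) gram; move: cauchy_schwarz.
  set S1 := norm1 z ^+ 2; set N := (n%:R : R); nra.
by rewrite -(ger0_norm S1_ge0) -sqrtr_sqr; apply: ler_wsqrtr.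
Qed.
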